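(* For every $n\ge1$, the map $\pi:\widehat{\mathcal{T}}_n\to\widehat{\mathcal{T}}_n$ is a bijection.
   Context: A plane binary tree is a finite rooted tree in which every vertex is either an endpoint (a leaf, with no children) or has exactly two children, an ordered left child and right child. Every non-root vertex is thus either a left descendent or a right descendent of its parent. The endpoints are ordered from left to right in the planar order. $\mathcal{T}_n$ denotes the set of plane binary trees with exactly $n+2$ endpoints. A last branching vertex of a plane binary tree is a non-endpoint vertex both of whose children are endpoints. For $n\ge1$ the root is never a last branching vertex. A marked tree is a pair $(T,v)$ with $T\in\mathcal{T}_n$ and $v$ a last branching vertex of $T$. The set of marked trees is $\widehat{\mathcal{T}}_n$. Definition of $\pi$. Let $(T,v)\in\widehat{\mathcal{T}}_n$, and let $a$ and $b$ be the left and right children of $v$ (both endpoints). Case 1: $v$ is a right child. - Delete the endpoint $a$ together with the edge $va$. The vertex $v$ and its remaining child $b$ are merged into a single endpoint, sitting at $v$'s position; this endpoint is a right child. The result is a tree with $n+1$ endpoints. - If $b$ was not the rightmost endpoint of $T$: let $L$ be the first endpoint to the right of this new endpoint that is a right child. Replace $L$ by a new internal vertex $w$ (still a right child, in $L$'s place) with two new endpoint children. - If $b$ was the rightmost endpoint of $T$: let $L$ be the rightmost endpoint of the reduced tree that is a left child. Replace $L$ by a new internal vertex $w$ (a left child, in $L$'s place) with two new endpoint children. - In either sub-case, $\pi(T,v)=(T',w)$, where $T'$ is the resulting tree and the mark is on $w$. Case 2: $v$ is a left child. Apply the mirror image of Case 1, exchanging left and right everywhere. - Delete $b$ and the edge $vb$,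 merging $v$ and $a$ into a single endpoint, which is a left child. - If $a$ was not the leftmost endpoint of $T$, graft a cherry (an internal vertex $w$ with two new endpoint children) onto the first left-child endpoint to its left. - Otherwise, graft the cherry onto the leftmost endpoint that is a right child. - Mark the new vertex $w$. *)

From mathcomp Require Import all_boot.
Set Implicit Arguments. Unset Strict Implicit. Unset Printing Implicit Defensive.

Inductive tree : Type := Leaf | Node of tree & tree.

(* Vertices are addressed by their path from the root:
   false = go to the left child, true = go to the right child. *)
Definition vertex := seq bool.

Fixpoint subtree (t : tree) (p : vertex) : option tree :=
  match p with
  | [::] => Some t
  | b :: p' => match t with
               | Leaf => None
               | Node l r => subtree (if b then r else l) p'
               end
  end.

(* Replace the subtree at vertex p by s (no-op if p is not a vertex). *)
Fixpoint replace (t : tree) (p : vertex) (s : tree) : tree :=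
  match p with
  | [::] => s
  | b :: p' => match t with
               | Leaf => Leaf
               | Node l r => if b then Node l (replace r p' s)
                             else Node (replace l p' s) r
               end
  end.

Fixpoint leaves (t : tree) : seq vertex :=
  match t with
  | Leaf => [:: [::]]
  | Node l r => map (cons false) (leaves l) ++ map (cons true) (leaves r)
  end.

Definition in_T (n : nat) (t : tree) : bool := size (leaves t) == n.+2.

(* A vertex is a right (resp. left) child iff its path is nonempty and
   ends with true (resp. false). The root is neither. *)
Definition is_right (p : vertex) : bool := last false p.
Definition is_left (p : vertex) : bool := ~~ last true p.

Definition last_branching (t : tree) (v : vertex) : bool :=
  if subtree t v is Some (Node Leaf Leaf) then true else false.

Definition marked_tree := (tree * vertex)%type.
Definition in_hatT (n : nat) (x : marked_tree) : bool :=
  in_T n x.1 && last_branching x.1 x.2.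

Definition cherry := Node Leaf Leaf.

Definition pi_map (x : marked_tree) : marked_tree :=
  let: (T, v) := x in
  let T1 := replace T v Leaf in
  let ls := leaves T1 in
  let i := index v ls in
  let L :=
    if is_right v then
      (* Case 1. b (path rcons v true) is the rightmost endpoint of T iff
         v consists only of right steps. *)
      if has (fun b => ~~ b) v then
        (* first endpoint to the right of the new endpoint that is a right child *)
        let rs := drop i.+1 ls in nth [::] rs (find is_right rs)
      else
        last [::] (filter is_left ls)
    else
      (* Case 2 (mirror). a is the leftmost endpoint iff v only has left steps. *)
      if has id v then
        (* first endpoint to the left of the new endpoint that is a left child *)
        last [::] (filter is_left (take i ls))
      else
        nth [::] ls (find is_right ls)
  in
  (replace T1 L cherry, L).

(* Pruning the marked cherry of (T, v) leaves a tree T1 in which v is a leaf, and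
   pi grafts a cherry onto a leaf L of T1 chosen from the left-to-right leaf
   sequence of T1 alone.  For a right child v that is not the last leaf, L is the
   next right child after v, so v is recovered as the previous right child before L;
   mirror-symmetrically for left children.  The exceptional cases match up because
   the only leaf with no left step is the last one and the only leaf with no right
   step is the first one: if v is the last leaf, L is the last left child, and no
   left child follows it.  Hence pi is inverted by the same prune-and-regraft
   procedure with the reversed choice of leaf. *)

From Pilot Require Import Defs.
From mathcomp Require Import all_boot.
Import Defs. (* [is_left] is shadowed by [ssrbool.is_left] otherwise. *)
Set Implicit Arguments. Unset Strict Implicit. Unset Printing Implicit Defensive.

Section Neighbours.
Variables (T : eqType) (p : pred T).
Implicit Types (d x y : T) (a b s : seq T).

Definition before s x := take (index x s) s.
Definition after s x := drop (index x s).+1 s.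

Definition next_in d s x := nth d (after s x) (find p (after s x)).
Definition prev_in d s x := last d (filter p (before s x)).

Lemma notin_before s x : x \notin before s x.
Proof. by apply/negP => /index_ltn; rewrite ltnn. Qed.

Variant pivot_spec x : seq T -> seq T -> seq T -> Prop :=
  Pivot a b of x \notin a : pivot_spec x (a ++ x :: b) a b.

Lemma pivotP s x : x \in s -> pivot_spec x s (before s x) (after s x).
Proof.
move=> xs; rewrite -{1}(cat_take_drop (index x s) s) drop_index //.
by constructor; exact: notin_before.
Qed.

Lemma before_pivot a x b : x \notin a -> before (a ++ x :: b) x = a.
Proof. exact: take_pivot. Qed.

Lemma after_pivot a x b : x \notin a -> after (a ++ x :: b) x = b.
Proof. by move=> xNa; rewrite /after index_pivot // -cat_rcons drop_size_cat ?size_rcons. Qed.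

Lemma uniq_pivotl a x b : uniq (a ++ x :: b) -> x \notin a.
Proof. by rewrite cat_uniq /= negb_or => /and3P[_ /andP[]]. Qed.

Lemma nth_find_pivot d a x b :
  p x -> ~~ has p a -> nth d (a ++ x :: b) (find p (a ++ x :: b)) = x.
Proof. by move=> px Na; rewrite find_cat (negbTE Na) /= px addn0 nth_cat ltnn subnn. Qed.

Lemma last_filter_pivot d a x b :
  p x -> ~~ has p b -> last d (filter p (a ++ x :: b)) = x.
Proof.
move=> px Nb; rewrite filter_cat /= px.
by move: Nb; rewrite has_filter negbK => /eqP->; rewrite last_cat.
Qed.

Lemma split_last_filter d s : has p s ->
  exists s1 s2, s = s1 ++ last d (filter p s) :: s2 /\ ~~ has p s2.
Proof.
elim/last_ind: s => // s y IHs; rewrite filter_rcons has_rcons.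
case: ifP => py /= hs; first by exists s, [::]; rewrite last_rcons cats1.
have [s1 [s2 [Es Ns2]]] := IHs hs.
by exists s1, (rcons s2 y); rewrite {1}Es rcons_cat has_rcons py.
Qed.

Lemma mem_last_filter d s : has p s -> last d (filter p s) \in filter p s.
Proof. by rewrite has_filter; case: (filter p s) => // y r _ /=; exact: mem_last. Qed.

Lemma next_in_mem d s x : has p (after s x) -> next_in d s x \in after s x.
Proof. by rewrite has_find => hs; exact: mem_nth. Qed.

Lemma next_in_pred d s x : has p (after s x) -> p (next_in d s x).
Proof. exact: nth_find. Qed.

Lemma prev_in_mem d s x : has p (before s x) -> prev_in d s x \in before s x.
Proof. by move/(mem_last_filter d); rewrite mem_filter => /andP[]. Qed.

Lemma prev_in_pred d s x : has p (before s x) -> p (prev_in d s x).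
Proof. by move/(mem_last_filter d); rewrite mem_filter => /andP[]. Qed.

Lemma next_in_default d s x : ~~ has p (after s x) -> next_in d s x = d.
Proof. by move=> hs; rewrite /next_in nth_default // leqNgt -has_find. Qed.

Lemma prev_in_default d s x : ~~ has p (before s x) -> prev_in d s x = d.
Proof. by rewrite has_filter negbK => /eqP; rewrite /prev_in => ->. Qed.

Lemma nth_find_eq d s x :
  x \in s -> p x -> ~~ has p (before s x) -> nth d s (find p s) = x.
Proof. by case/pivotP=> a b _; exact: nth_find_pivot. Qed.

Lemma last_filter_eq d s x :
  x \in s -> p x -> ~~ has p (after s x) -> last d (filter p s) = x.
Proof. by case/pivotP=> a b _; exact: last_filter_pivot. Qed.

Lemma has_before_find d s : has p s -> has p (before s (nth d s (find p s))) = false.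
Proof.
case/(split_find_nth d) => y s1 s2 py Ns1; apply/negbTE.
rewrite cat_rcons before_pivot //; apply: contra Ns1 => ys1.
by apply/hasP; exists y.
Qed.

Lemma has_after_last_filter d s :
  uniq s -> has p s -> has p (after s (last d (filter p s))) = false.
Proof.
move=> Us /(split_last_filter d) [s1 [s2 [Es Ns2]]]; apply/negbTE.
by rewrite {1}Es after_pivot // (uniq_pivotl (a := s1) (b := s2)) -?Es.
Qed.

Lemma next_inK d d' s x : uniq s -> x \in s -> p x -> has p (after s x) ->
  prev_in d s (next_in d' s x) = x.
Proof.
move=> Us xs px; move: Us; case/pivotP: xs => a b xNa.
rewrite /next_in after_pivot // => Us hb.
move: Us; case: (split_find_nth d' hb) => y b1 b2 py Nb1.
rewrite cat_rcons -[a ++ x :: _]/(a ++ (x :: b1) ++ _) catA => Us.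
rewrite /prev_in before_pivot ?(uniq_pivotl Us) //; exact: last_filter_pivot.
Qed.

Lemma prev_inK d d' s x : uniq s -> x \in s -> p x -> has p (before s x) ->
  next_in d s (prev_in d' s x) = x.
Proof.
move=> Us xs px; move: Us; case/pivotP: xs => a b xNa.
rewrite /prev_in before_pivot // => Us ha.
have [a1 [a2 [Ea Na2]]] := split_last_filter d' ha.
set y := last d' _ in Ea *; rewrite Ea -catA cat_cons in Us *.
by rewrite /next_in after_pivot ?(uniq_pivotl Us) // nth_find_pivot.
Qed.

End Neighbours.

Section Ends.
Variables (T : eqType) (d : T).
Implicit Types (x : T) (s : seq T).

Lemma mem_head_before s x : x \in s -> x != head d s -> head d s \in before s x.
Proof. by case/pivotP=> -[|y a] b _ /=; rewrite ?eqxx ?mem_head. Qed.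

Lemma mem_last_after s x : x \in s -> x != last d s -> last d s \in after s x.
Proof.
by case/pivotP=> a [|y b] _; rewrite last_cat /= ?eqxx // => _; exact: mem_last.
Qed.

Lemma last_notin_before s x : uniq s -> x \in s -> last d s \notin before s x.
Proof.
move=> Us xs; move: Us; case/pivotP: xs => a b xNa.
rewrite last_cat cat_uniq.
by case/and3P=> _ /hasPn Nab _; exact: Nab (mem_last x b).
Qed.

Lemma head_notin_after s x : uniq s -> x \in s -> head d s \notin after s x.
Proof.
move=> Us xs; move: Us; case/pivotP: xs => [[|y a] b xNa] /=.
  by case/andP.
by rewrite /= mem_cat inE negb_or => /andP[/andP[_ /norP[_]]].
Qed.

End Ends.

Lemma leftmost_is_left (p : vertex) : p != [::] -> ~~ has id p -> is_left p.
Proof.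
case: p => // b p _; apply: contra => Lp.
by apply/hasP; exists (last b p); rewrite ?mem_last.
Qed.

Lemma rightmost_is_right (p : vertex) : p != [::] -> ~~ has (fun b => ~~ b) p -> is_right p.
Proof.
case: p => // b p _; apply: contraR => Rp.
by apply/hasP; exists (last b p); rewrite ?mem_last.
Qed.

Record leaf_seq (ls : seq vertex) : Prop := LeafSeq {
  leaf_seq_uniq : uniq ls;
  leaf_seq_neq0 : ls != [::];
  leaf_seq_nonroot : forall p, p \in ls -> p != [::];
  leaf_seq_head : ~~ has id (head [::] ls);
  leaf_seq_leftmost : forall p, p \in ls -> ~~ has id p -> p = head [::] ls;
  leaf_seq_last : ~~ has (fun b => ~~ b) (last [::] ls);
  leaf_seq_rightmost : forall p, p \in ls -> ~~ has (fun b => ~~ b) p -> p = last [::] ls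
}.

Definition pi_site (ls : seq vertex) (v : vertex) : vertex :=
  if is_right v then
    if has (fun b => ~~ b) v then next_in is_right [::] ls v
    else last [::] (filter is_left ls)
  else
    if has id v then prev_in is_left [::] ls v
    else nth [::] ls (find is_right ls).

(* When no right child precedes w, w is the first right child, which is where pi
   grafts exactly when the pruned cherry sat at the first leaf; hence the default
   [head [::] ls], and symmetrically [last [::] ls]. *)
Definition pi_inv_site (ls : seq vertex) (w : vertex) : vertex :=
  if is_right w then prev_in is_right (head [::] ls) ls w
  else next_in is_left (last [::] ls) ls w.

Section LeafSeq.
Variable ls : seq vertex.
Hypothesis Hls : leaf_seq ls.

Let Uls := leaf_seq_uniq Hls.

Lemma mem_head_leaf : head [::] ls \in ls.
Proof. by case: ls (leaf_seq_neq0 Hls) => // p s _; exact: mem_head. Qed.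

Lemma mem_last_leaf : last [::] ls \in ls.
Proof. by case: ls (leaf_seq_neq0 Hls) => // p s _ /=; exact: mem_last. Qed.

Lemma is_right_leaf p : p \in ls -> is_right p = ~~ is_left p.
Proof.
by move/(leaf_seq_nonroot Hls); case: p => // b p _; rewrite /is_right /is_left negbK.
Qed.

Lemma is_left_head : is_left (head [::] ls).
Proof. exact: leftmost_is_left (leaf_seq_nonroot Hls mem_head_leaf) (leaf_seq_head Hls). Qed.

Lemma is_right_last : is_right (last [::] ls).
Proof. exact: rightmost_is_right (leaf_seq_nonroot Hls mem_last_leaf) (leaf_seq_last Hls). Qed.

Lemma has_left_leaf : has is_left ls.
Proof. by apply/hasP; exists (head [::] ls); [exact: mem_head_leaf | exact: is_left_head]. Qed.

Lemma has_right_leaf : has is_right ls.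
Proof. by apply/hasP; exists (last [::] ls); [exact: mem_last_leaf | exact: is_right_last]. Qed.

Lemma pi_siteK v : v \in ls -> pi_site ls v \in ls /\ pi_inv_site ls (pi_site ls v) = v.
Proof.
move=> vls; rewrite /pi_site /pi_inv_site; case: ifP => Rv; case: ifP => Nv.
- have hR : has is_right (after ls v).
    apply/hasP; exists (last [::] ls); last exact: is_right_last.
    apply: mem_last_after => //; apply: contraTneq Nv => ->; exact: leaf_seq_last.
  rewrite next_in_pred //; split; first exact: mem_drop (next_in_mem _ hR).
  exact: next_inK.
- have -> : v = last [::] ls by apply: leaf_seq_rightmost; rewrite ?Nv.
  have := mem_last_filter [::] has_left_leaf; rewrite mem_filter => /andP[Lw wls].
  rewrite is_right_leaf // Lw /=; split=> //.
  by rewrite next_in_default ?(has_after_last_filter _ Uls has_left_leaf).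
- have hL : has is_left (before ls v).
    apply/hasP; exists (head [::] ls); last exact: is_left_head.
    apply: mem_head_before => //; apply: contraTneq Nv => ->; exact: leaf_seq_head.
  have wls := mem_take (prev_in_mem [::] hL).
  rewrite is_right_leaf // prev_in_pred //; split=> //.
  by rewrite prev_inK // -[is_left v]negbK -is_right_leaf ?Rv.
- have -> : v = head [::] ls by apply: leaf_seq_leftmost; rewrite ?Nv.
  have := nth_find [::] has_right_leaf; set w := nth _ _ _ => Rw.
  have wls : w \in ls by rewrite mem_nth -?has_find ?has_right_leaf.
  by rewrite Rw; split=> //; rewrite prev_in_default ?has_before_find ?has_right_leaf.
Qed.

Lemma pi_inv_siteK w : w \in ls -> pi_inv_site ls w \in ls /\ pi_site ls (pi_inv_site ls w) = w.
Proof.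
move=> wls; rewrite /pi_inv_site /pi_site; case: ifP => Rw.
- have [hR|hNR] := boolP (has is_right (before ls w)).
    set v := prev_in _ _ _ _; have vb : v \in before ls w by exact: prev_in_mem.
    have vls := mem_take vb.
    have Nv : has (fun b => ~~ b) v.
      apply: contraR (last_notin_before [::] Uls wls) => /(leaf_seq_rightmost Hls vls) <-.
      exact: vb.
    by rewrite prev_in_pred // Nv; split=> //; exact: prev_inK.
  rewrite prev_in_default // (is_right_leaf mem_head_leaf) is_left_head /=.
  rewrite (negbTE (leaf_seq_head Hls)).
  by split; [exact: mem_head_leaf | exact: nth_find_eq].
- have Lw : is_left w by rewrite -[is_left w]negbK -is_right_leaf ?Rw.
  have [hL|hNL] := boolP (has is_left (after ls w)).
    set v := next_in _ _ _ _; have va : v \in after ls w by exact: next_in_mem.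
    have vls := mem_drop va.
    have Nv : has id v.
      apply: contraR (head_notin_after [::] Uls wls) => /(leaf_seq_leftmost Hls vls) <-.
      exact: va.
    rewrite is_right_leaf // next_in_pred // Nv; split=> //.
    exact: next_inK.
  rewrite next_in_default // is_right_last (negbTE (leaf_seq_last Hls)).
  by split; [exact: mem_last_leaf | exact: last_filter_eq].
Qed.

End LeafSeq.

Lemma leaves_neq0 t : leaves t != [::].
Proof. by elim: t => //= l IHl r _; case: (leaves l) IHl. Qed.

Lemma mem_cons_map (b c : bool) (p : vertex) (s : seq vertex) :
  (b :: p \in map (cons c) s) = (b == c) && (p \in s).
Proof. by apply/mapP/andP => [[q qs [-> ->]] | [/eqP-> ps]]; last exists p. Qed.

Lemma uniq_leaves t : uniq (leaves t).
Proof.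
elim: t => //= l IHl r IHr; rewrite cat_uniq !map_inj_uniq ?IHl ?IHr //=; try by move=> ? ? [].
by rewrite andbT; apply/hasPn => _ /mapP[q _ ->]; rewrite /= mem_cons_map.
Qed.

Lemma head_leaves t : ~~ has id (head [::] (leaves t)).
Proof. by elim: t => //= l IHl r _; case: (leaves l) IHl (leaves_neq0 l). Qed.

Lemma leftmost_leaves t p : p \in leaves t -> ~~ has id p -> p = head [::] (leaves t).
Proof.
elim: t p => [|l IHl r _] p /=; first by rewrite inE => /eqP.
rewrite mem_cat => /orP[] /mapP[q qs ->] //= Nq.
by rewrite (IHl q qs Nq); case: (leaves l) (leaves_neq0 l).
Qed.

Lemma last_leaves_node l r : last [::] (leaves (Node l r)) = true :: last [::] (leaves r).
Proof. by rewrite /= last_cat; case: (leaves r) (leaves_neq0 r) => //= q s _; rewrite last_map. Qed.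

Lemma last_leaves t : ~~ has (fun b => ~~ b) (last [::] (leaves t)).
Proof. by elim: t => //= l _ r IHr; rewrite -/(leaves (Node l r)) last_leaves_node. Qed.

Lemma rightmost_leaves t p :
  p \in leaves t -> ~~ has (fun b => ~~ b) p -> p = last [::] (leaves t).
Proof.
elim: t p => [|l _ r IHr] p; first by rewrite /= inE => /eqP.
rewrite last_leaves_node /= mem_cat => /orP[] /mapP[q qs ->] //= Nq.
by rewrite (IHr q qs Nq).
Qed.

Lemma leaf_seq_leaves l r : leaf_seq (leaves (Node l r)).
Proof.
split; [exact: uniq_leaves | exact: leaves_neq0 | | exact: head_leaves
  | exact: leftmost_leaves | exact: last_leaves | exact: rightmost_leaves].
by move=> p; rewrite /= mem_cat => /orP[] /mapP[q _ ->].
Qed.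

Lemma mem_leaves t p : p \in leaves t <-> subtree t p = Some Leaf.
Proof.
elim: t p => [|l IHl r IHr] [|b p] /=; rewrite ?inE //.
- by split=> //; rewrite mem_cat => /orP[] /mapP[].
by rewrite mem_cat !mem_cons_map; case: b => /=; rewrite ?orbF.
Qed.

Lemma subtree_nil t : subtree t [::] = Some t.
Proof. by case: t. Qed.

Lemma replace_nil t s : replace t [::] s = s.
Proof. by case: t. Qed.

Lemma subtree_replace t p s s' : subtree t p = Some s -> subtree (replace t p s') p = Some s'.
Proof.
elim: p t => [|b p IHp] [|l r] //=; rewrite ?replace_nil ?subtree_nil //.
by case: b => /IHp.
Qed.

Lemma replaceK t p s s' : subtree t p = Some s -> replace (replace t p s') p s = t.
Proof.
elim: p t => [|b p IHp] [|l r] //=; rewrite ?replace_nil; [by case=> -> | by case=> -> |].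
by case: b => /= /IHp->.
Qed.

Lemma size_leaves_replace t p s s' : subtree t p = Some s ->
  size (leaves (replace t p s')) + size (leaves s) = size (leaves t) + size (leaves s').
Proof.
elim: p t => [|b p IHp] [|l r] //=; rewrite ?replace_nil.
- by case=> <-; rewrite addnC.
- by case=> <-; rewrite addnC.
case: b => /= /IHp; rewrite !size_cat !size_map => IH; first by rewrite -!addnA IH.
by rewrite addnAC IH addnAC.
Qed.

Definition regraft (site : seq vertex -> vertex -> vertex) (x : marked_tree) : marked_tree :=
  let: (T, v) := x in
  let T1 := replace T v Leaf in
  let L := site (leaves T1) v in
  (replace T1 L cherry, L).

Lemma pi_mapE : pi_map =1 regraft pi_site.
Proof. by case. Qed.

Lemma in_hatT_prune n T v : 0 < n -> in_hatT n (T, v) ->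
  [/\ subtree T v = Some cherry, leaf_seq (leaves (replace T v Leaf)),
    v \in leaves (replace T v Leaf) & size (leaves (replace T v Leaf)) = n.+1].
Proof.
move=> n_gt0 /andP[/= /eqP sizeT lbv]; set T1 := replace T v Leaf.
have Tv : subtree T v = Some cherry.
  by move: lbv; rewrite /last_branching; case: subtree => [[|[|? ?] [|? ?]]|].
have size1 : size (leaves T1) = n.+1.
  by have := size_leaves_replace Leaf Tv; rewrite sizeT /= addn1 addn2 => -[].
split=> //; last exact/mem_leaves/(subtree_replace _ Tv).
move: size1; case: T1 => [[n0]|l r _]; last exact: leaf_seq_leaves.
by move: n_gt0; rewrite -n0.
Qed.

Lemma in_hatT_graft n T p : subtree T p = Some Leaf -> size (leaves T) = n.+1 ->
  in_hatT n (replace T p cherry, p).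
Proof.
move=> Tp sizeT; apply/andP; split; last by rewrite /last_branching (subtree_replace _ Tp).
by have := size_leaves_replace cherry Tp; rewrite /in_T sizeT /= addn1 addn2 => -[->].
Qed.

Section Regraft.
Variables (n : nat) (site site' : seq vertex -> vertex -> vertex).
Hypothesis n_gt0 : 0 < n.

Lemma in_hatT_regraft :
  (forall ls, leaf_seq ls -> forall v, v \in ls -> site ls v \in ls) ->
  forall x, in_hatT n x -> in_hatT n (regraft site x).
Proof.
move=> site_mem [T v] /(in_hatT_prune n_gt0) [_ Hls vls size1].
by apply: in_hatT_graft size1; apply/mem_leaves; exact: site_mem.
Qed.

Lemma regraftK :
  (forall ls, leaf_seq ls -> forall v, v \in ls -> site ls v \in ls /\ site' ls (site ls v) = v) ->
  forall x, in_hatT n x -> regraft site' (regraft site x) = x.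
Proof.
move=> siteK [T v] /(in_hatT_prune n_gt0) [Tv Hls vls _].
have [/mem_leaves T1L siteKv] := siteK _ Hls _ vls.
by rewrite /= (replaceK _ T1L) siteKv (replaceK _ Tv).
Qed.

End Regraft.

Theorem lemma2 (n : nat) (hn : 1 <= n) :
  (forall x : marked_tree, in_hatT n x -> in_hatT n (pi_map x)) /\
  {in in_hatT n &, injective pi_map} /\
  (forall y : marked_tree, in_hatT n y -> exists2 x, in_hatT n x & pi_map x = y).
Proof.
have piK := regraftK hn pi_siteK.
have pi_invK := regraftK hn pi_inv_siteK.
split; [|split].
- move=> x; rewrite pi_mapE; apply: in_hatT_regraft hn _ x.
  by move=> ls Hls v /(pi_siteK Hls) [].
- move=> x y xh yh; rewrite !pi_mapE => Exy.
  by rewrite -(piK x xh) Exy piK.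
- move=> y yh; exists (regraft pi_inv_site y); last by rewrite pi_mapE pi_invK.
  apply: in_hatT_regraft hn _ y yh.
  by move=> ls Hls w /(pi_inv_siteK Hls) [].
Qed.
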